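(* Let $\Gamma$ be a distance-regular graph with diameter $D\ge 3$, valency $k$ and $a_1\neq 0$. Let $\sigma_0,\sigma_1,\dots,\sigma_D$ and $\varepsilon$ be real numbers with $\sigma_0=1$; write $\sigma=\sigma_1$. Consider the following conditions. Condition A: $\varepsilon\neq -1$, and for $1\le i\le D-1$, $$a_i=g\,\frac{(\sigma_{i+1}-\sigma\sigma_i)(\sigma_{i-1}-\sigma\sigma_i)}{(\sigma_{i+1}-\sigma_i)(\sigma_{i-1}-\sigma_i)},\qquad g=\frac{(\varepsilon-1)(1-\sigma_2)}{(\sigma^2-\sigma_2)(1-\varepsilon\sigma)},$$ with all denominators appearing here nonzero. Condition B: for $1\le i\le D-1$, $$b_i(\sigma_{i-1}-\sigma_{i+1})=h\,\frac{(\sigma_{i-1}-\sigma\sigma_i)(\sigma_{i+1}-\varepsilon\sigma_i)}{\sigma_{i+1}-\sigma_i},\qquad h=\frac{(1-\sigma)(1-\sigma_2)}{(\sigma^2-\sigma_2)(1-\varepsilon\sigma)},$$ with all denominators appearing here nonzero. Condition C: $k=h\dfrac{\sigma-\varepsilon}{\sigma-1}$ and for $1\le i\le D-1$, $$c_i(\sigma_{i+1}-\sigma_{i-1})=h\,\frac{(\sigma_{i+1}-\sigma\sigma_i)(\sigma_{i-1}-\varepsilon\sigma_i)}{\sigma_{i-1}-\sigma_i},$$ with $h$ as in Condition B, and all denominators appearing here (including that of $h$) nonzero. Then the following are equivalent: (i) $\sigma_0,\dots,\sigma_D$ is a tight nontrivial pseudo cosine sequence and $\varepsilon$ is its auxiliary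 parameter; (ii) $\sigma_0,\dots,\sigma_D$ is a nontrivial pseudo cosine sequence and $\sigma_0,\dots,\sigma_D,\varepsilon$ satisfy Condition A; (iii) $\sigma_0,\dots,\sigma_D,\varepsilon$ satisfy both Condition A and Condition B; (iv) $\sigma_0,\dots,\sigma_D,\varepsilon$ satisfy both Condition A and Condition C.
   Context: $\Gamma$ is a finite connected undirected graph without loops or multiple edges, distance-regular with diameter $D$, intersection numbers $a_i,b_i,c_i$ ($c_0=0$, $b_D=0$, $c_1=1$), valency $k=b_0$, $c_i+a_i+b_i=k$. For $\theta\in\mathbb{R}$ the pseudo cosine sequence for $\theta$ is the sequence of reals $\sigma_0,\dots,\sigma_D$ with $\sigma_0=1$ and $c_i\sigma_{i-1}+a_i\sigma_i+b_i\sigma_{i+1}=\theta\sigma_i$ for $0\le i\le D-1$; then $\theta=k\sigma_1$. The trivial pseudo cosine sequence is the one for $\theta=k$ (all terms equal $1$); a pseudo cosine sequence is nontrivial if $\sigma_1\neq 1$. Pseudo cosine sequences $\sigma_i$, $\rho_i$ form a tight pair if $(\sigma_i\rho_i)_{i=0}^D$ is a pseudo cosine sequence. For a tight pair of nontrivial pseudo cosine sequences, an auxiliary parameter is a real $\varepsilon$ with $\sigma_i\rho_i-\sigma_{i-1}\rho_{i-1}=\varepsilon(\sigma_{i-1}\rho_i-\sigma_i\rho_{i-1})$ for $1\le i\le D$. When $a_1\neq0$, a nontrivial pseudo cosine sequence $\sigma_0,\dots,\sigma_D$ is called tight if there exists a nontrivial pseudo cosine sequence $\rho_0,\dots,\rho_D$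 such that the two form a tight pair; the auxiliary parameter of $\sigma_0,\dots,\sigma_D$ is the auxiliary parameter of this tight pair (which is uniquely determined in this situation). *)

From HB Require Import structures.
From mathcomp Require Import all_boot all_order all_algebra.
Set Implicit Arguments. Unset Strict Implicit. Unset Printing Implicit Defensive.
Import Order.TTheory GRing.Theory Num.Theory.

Section Graph.
Variables (V : finType) (e : rel V).

Definition simple_graph : Prop := symmetric e /\ irreflexive e.
Definition connected_graph : Prop := forall x y : V, connect e x y.

Fixpoint within (n : nat) (x y : V) : bool :=
  match n with
  | 0 => x == y
  | n'.+1 => within n' x y || [exists z, within n' x z && e z y]
  end.

(* path-length distance (correct for connected graphs: every distance is < #|V|) *)
Definition dist (x y : V) : nat := find (fun n => within n x y) (iota 0 #|V|).

Definition diameter : nat := \max_(x : V) \max_(y : V) dist x y.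

Definition distance_regular (c a b : nat -> nat) : Prop :=
  forall x y : V,
    [/\ #|[set z | e x z & (dist z y).+1 == dist x y]| = c (dist x y),
        #|[set z | e x z & dist z y == dist x y]| = a (dist x y) &
        #|[set z | e x z & dist z y == (dist x y).+1]| = b (dist x y)].
End Graph.

Local Open Scope ring_scope.
Section PCS.
Variables (R : realFieldType) (D : nat) (c a b : nat -> nat).

(* sigma is a pseudo cosine sequence for theta (only sigma_0..sigma_D matter) *)
Definition pcs_for (theta : R) (s : nat -> R) : Prop :=
  s 0%N = 1 /\
  forall i : nat, (i < D)%N ->
    (c i)%:R * s i.-1 + (a i)%:R * s i + (b i)%:R * s i.+1 = theta * s i.

Definition pcs (s : nat -> R) : Prop := exists theta : R, pcs_for theta s.

Definition nontrivial_pcs (s : nat -> R) : Prop := pcs s /\ s 1%N != 1.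

Definition tight_pair (s r : nat -> R) : Prop :=
  [/\ pcs s, pcs r & pcs (fun i => s i * r i)].

Definition aux_param (s r : nat -> R) (eps : R) : Prop :=
  forall i : nat, (1 <= i <= D)%N ->
    s i * r i - s i.-1 * r i.-1 = eps * (s i.-1 * r i - s i * r i.-1).

Definition tight_with_aux (s : nat -> R) (eps : R) : Prop :=
  nontrivial_pcs s /\
  exists r : nat -> R, [/\ nontrivial_pcs r, tight_pair s r & aux_param s r eps].

Definition gA (s : nat -> R) (eps : R) : R :=
  (eps - 1) * (1 - s 2%N) / ((s 1%N ^+ 2 - s 2%N) * (1 - eps * s 1%N)).

Definition hB (s : nat -> R) (eps : R) : R :=
  (1 - s 1%N) * (1 - s 2%N) / ((s 1%N ^+ 2 - s 2%N) * (1 - eps * s 1%N)).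

Definition condA (s : nat -> R) (eps : R) : Prop :=
  [/\ eps != -1,
      s 1%N ^+ 2 - s 2%N != 0,
      1 - eps * s 1%N != 0 &
      forall i : nat, (1 <= i <= D.-1)%N ->
        [/\ s i.+1 - s i != 0, s i.-1 - s i != 0 &
        (a i)%:R = gA s eps *
          ((s i.+1 - s 1%N * s i) * (s i.-1 - s 1%N * s i)) /
          ((s i.+1 - s i) * (s i.-1 - s i))]].

Definition condB (s : nat -> R) (eps : R) : Prop :=
  [/\ s 1%N ^+ 2 - s 2%N != 0,
      1 - eps * s 1%N != 0 &
      forall i : nat, (1 <= i <= D.-1)%N ->
        s i.+1 - s i != 0 /\
        (b i)%:R * (s i.-1 - s i.+1) = hB s eps *
          ((s i.-1 - s 1%N * s i) * (s i.+1 - eps * s i)) / (s i.+1 - s i)].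

Definition condC (s : nat -> R) (eps : R) : Prop :=
  [/\ s 1%N ^+ 2 - s 2%N != 0,
      1 - eps * s 1%N != 0,
      s 1%N - 1 != 0,
      (b 0%N)%:R = hB s eps * (s 1%N - eps) / (s 1%N - 1) &
      forall i : nat, (1 <= i <= D.-1)%N ->
        s i.-1 - s i != 0 /\
        (c i)%:R * (s i.+1 - s i.-1) = hB s eps *
          ((s i.+1 - s 1%N * s i) * (s i.-1 - eps * s i)) / (s i.-1 - s i)].
End PCS.

(* Write the auxiliary relation as
     rho_i (sigma_i - eps sigma_{i-1}) = rho_{i-1} (sigma_{i-1} - eps sigma_i).
   It gives rho_{i-1} and rho_{i+1} in terms of rho_i, so substituting into the
   recurrence for rho eliminates rho; combined with the recurrence for sigma and
   c_i + a_i + b_i = k this yields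
     a_i (sigma_{i-1} - sigma_i) (sigma_{i+1} - sigma_i) (sigma - eps)
       = k (1 - eps) (sigma_{i+1} - sigma sigma_i) (sigma_{i-1} - sigma sigma_i).
   At i = 1, together with the recurrence, this forces k = (eps - sigma) mu with
   mu = (1 - sigma_2) / ((sigma^2 - sigma_2) (1 - eps sigma)), and then it is
   exactly Condition A. Conversely, under Condition A the same computation run
   backwards shows by induction that the pseudo cosine sequence rho with
   rho_1 = (1 - eps sigma) / (sigma - eps) satisfies the auxiliary relation, and
   the two recurrences together with the auxiliary relation make sigma_i rho_i a
   pseudo cosine sequence. The values eps = 1 and eps = -1 are excluded by a sign
   argument on the first three steps, using the positivity of the intersection
   numbers. Finally, once Condition A holds and k = (eps - sigma) mu, the
   recurrence at i is equivalent to the b_i-equation of Condition B and to the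
   c_i-equation of Condition C. *)

From mathcomp Require Import all_boot all_order all_algebra.
From mathcomp Require Import ring lra zify.
Set Implicit Arguments. Unset Strict Implicit. Unset Printing Implicit Defensive.
Import Order.TTheory GRing.Theory Num.Theory.

Record intersection_numbers (D : nat) (c a b : nat -> nat) : Prop := {
  cab_sum : forall i, i <= D -> c i + a i + b i = b 0;
  c0_eq0 : c 0 = 0;
  a0_eq0 : a 0 = 0;
  c1_eq1 : c 1 = 1;
  c_gt0 : forall i, 0 < i <= D -> 0 < c i;
  b_gt0 : forall i, i < D -> 0 < b i;
  a_gt0 : forall i, 0 < i < D -> 0 < a i }.

Section Distance.
Variables (V : finType) (e : rel V).
Hypotheses (e_sym : symmetric e) (e_irr : irreflexive e) (e_conn : connected_graph e).

Lemma within_mono n m x y : n <= m -> within e n x y -> within e m x y.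
Proof.
elim: m => [|m IHm]; first by rewrite leqn0 => /eqP ->.
by rewrite leq_eqVlt => /orP[/eqP -> // | /IHm IH] /IH /= ->.
Qed.

Lemma within_cons n x z y : e x z -> within e n z y -> within e n.+1 x y.
Proof.
move=> exz; elim: n y => [|n IHn] y.
  by move/eqP <-; apply/orP; right; apply/existsP; exists x; rewrite /= eqxx.
rewrite [within e n.+1 z y]/= => /orP[/IHn wxy | /existsP[w /andP[/IHn wxw ewy]]].
  by apply/orP; left.
by apply/orP; right; apply/existsP; exists w; apply/andP.
Qed.

Lemma within_sym n x y : within e n x y -> within e n y x.
Proof.
elim: n x y => [|n IHn] x y /=; first by rewrite eq_sym.
case/orP=> [/IHn -> // | /existsP[w /andP[/IHn wx ewy]]].
by apply: within_cons wx; rewrite e_sym.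
Qed.

Lemma within_path x p : path e x p -> within e (size p) x (last x p).
Proof.
elim: p x => [|y p IHp] x /=; first by rewrite eqxx.
by case/andP=> exy /IHp; apply: within_cons.
Qed.

Lemma within_card x y : within e #|V|.-1 x y.
Proof.
have /connectP[p ep ->] := e_conn x y.
have [q eq uq _] := shortenP ep.
apply: within_mono (within_path eq).
by have := max_card (mem (x :: q)); rewrite (card_uniqP uq) /=; lia.
Qed.

Lemma leq_distE n x y : (dist e x y <= n) = within e n x y.
Proof.
have Vgt0 : 0 < #|V| by apply/card_gt0P; exists x.
have has_w : has (fun m => within e m x y) (iota 0 #|V|).
  by apply/hasP; exists #|V|.-1; [rewrite mem_iota; lia | exact: within_card].
have dist_lt : dist e x y < #|V| by rewrite -[X in _ < X](size_iota 0) -has_find.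
apply/idP/idP => [le_dn | w_n].
  by apply: within_mono le_dn _; have := nth_find 0 has_w; rewrite nth_iota.
rewrite leqNgt; apply/negP => lt_nd; have := before_find 0 lt_nd.
by rewrite nth_iota /= ?add0n ?w_n //; apply: ltn_trans dist_lt.
Qed.

Lemma dist_sym x y : dist e x y = dist e y x.
Proof.
by apply/eqP; rewrite eqn_leq !leq_distE; apply/andP; split; apply: within_sym; rewrite -leq_distE.
Qed.

Lemma dist_eq0 x y : (dist e x y == 0) = (x == y).
Proof. by rewrite -leqn0 leq_distE. Qed.

Lemma distxx x : dist e x x = 0.
Proof. by apply/eqP; rewrite dist_eq0. Qed.

Lemma dist_eq1 x y : (dist e x y == 1) = e x y.
Proof.
rewrite eqn_leq leq_distE /= lt0n dist_eq0.
apply/idP/idP => [/andP[/orP[/eqP -> | /existsP[z /andP[/eqP <- //]]]] | exy].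
  by rewrite eqxx.
apply/andP; split; last by apply: contraTneq exy => ->; rewrite e_irr.
by apply/orP; right; apply/existsP; exists x; rewrite eqxx.
Qed.

Lemma dist_edge_r x y z : e y z -> dist e x z <= (dist e x y).+1.
Proof.
move=> eyz; rewrite leq_distE /=; apply/orP; right; apply/existsP; exists y.
by rewrite eyz -leq_distE leqnn.
Qed.

Lemma dist_edge_l x w y : e x w -> dist e x y <= (dist e w y).+1.
Proof. by move=> exw; rewrite leq_distE; apply: within_cons exw _; rewrite -leq_distE. Qed.

Lemma dist_last_edge x y n : dist e x y = n.+1 -> exists2 z, e z y & dist e x z = n.
Proof.
move=> dxy; have : within e n.+1 x y by rewrite -leq_distE dxy.
rewrite /= => /orP[|/existsP[z /andP[wz ezy]]]; first by rewrite -leq_distE dxy ltnn.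
by exists z => //; have := dist_edge_r x ezy; rewrite -leq_distE in wz; lia.
Qed.

Lemma dist_first_edge x y n : dist e x y = n.+1 -> exists2 z, e x z & dist e z y = n.
Proof.
by rewrite dist_sym => /dist_last_edge[z ezx dyz]; exists z; rewrite 1?e_sym // dist_sym.
Qed.

Lemma exists_dist_leq x y n : n <= dist e x y -> exists z, dist e x z = n.
Proof.
suff: forall m y, dist e x y = m -> n <= m -> exists z, dist e x z = n by apply.
elim=> [|m IHm] {}y dxy; first by rewrite leqn0 => /eqP ->; exists y.
rewrite leq_eqVlt => /orP[/eqP ->|]; first by exists y.
by have [z _ /IHm] := dist_last_edge dxy.
Qed.

Section DistanceRegular.
Variables (D : nat) (c a b : nat -> nat).
Hypotheses (e_dr : distance_regular e c a b) (D_diam : D = diameter e) (D_gt0 : 0 < D).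

Lemma exists_dist i : i <= D -> exists x y, dist e x y = i.
Proof.
have [x0 _] : exists x : V, true.
  case: (pickP (@predT V)) => [x _|V0]; first by exists x.
  by move: D_gt0; rewrite D_diam /diameter big_pred0.
have V_gt0 : 0 < #|V| by apply/card_gt0P; exists x0.
have [x dx] := bigop.eq_bigmax (fun x => \max_(y : V) dist e x y) V_gt0.
have [y dxy] := bigop.eq_bigmax (fun y => dist e x y) V_gt0.
rewrite D_diam /diameter dx dxy => /exists_dist_leq[z dxz].
by exists x, z.
Qed.

Lemma cab_card x y :
  c (dist e x y) + a (dist e x y) + b (dist e x y) = #|[set z | e x z]|.
Proof.
have [<- <- <-] := e_dr x y; set d := dist e x y.
have near z : e x z -> (d <= (dist e z y).+1) && (dist e z y <= d.+1).
  by move=> exz; rewrite !dist_edge_l // e_sym.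
rewrite -(cardsID [set z | (dist e z y).+1 == d] [set z | e x z]).
rewrite -(cardsID [set z | dist e z y == d] (_ :\: _)) addnA.
congr (_ + _ + _); apply: eq_card => z; rewrite !inE;
  case exz: (e x z); rewrite ?andbF ?andbT ?andFb //=; move: (near z exz);
  case: (ltngtP (dist e z y) d) => dzd; rewrite ?eqxx /=; lia.
Qed.

Lemma c0_drg : c 0 = 0.
Proof.
have [x [y dxy]] := exists_dist (leq0n D); have [+ _ _] := e_dr x y; rewrite dxy => <-.
by apply/eqP; rewrite cards_eq0; apply/eqP/setP => z; rewrite !inE andbF.
Qed.

Lemma a0_drg : a 0 = 0.
Proof.
have [x [y dxy]] := exists_dist (leq0n D); have [_ + _] := e_dr x y; rewrite dxy => <-.
move/eqP: dxy; rewrite dist_eq0 => /eqP->.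
apply/eqP; rewrite cards_eq0; apply/eqP/setP => z; rewrite !inE dist_eq0.
by apply/negbTE/andP => -[+ /eqP zy]; rewrite zy e_irr.
Qed.

Lemma cab_sum_drg i : i <= D -> c i + a i + b i = b 0.
Proof.
move=> /exists_dist[x [y <-]]; rewrite cab_card.
by rewrite -(cab_card x x) distxx c0_drg a0_drg.
Qed.

Lemma c1_drg : c 1 = 1.
Proof.
have [x [y dxy]] := exists_dist D_gt0; have [+ _ _] := e_dr x y; rewrite dxy => <-.
suff -> : [set z | e x z & (dist e z y).+1 == 1] = [set y] by rewrite cards1.
apply/setP => z; rewrite !inE eqSS dist_eq0.
by case: eqP => [->|]; rewrite ?andbF // andbT -dist_eq1 dxy.
Qed.

Lemma c_gt0_drg i : 0 < i <= D -> 0 < c i.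
Proof.
case: i => // i /exists_dist[x [y dxy]]; have [+ _ _] := e_dr x y; rewrite dxy => <-.
have [z exz dzy] := dist_first_edge dxy.
by apply/card_gt0P; exists z; rewrite !inE exz dzy eqxx.
Qed.

Lemma b_gt0_drg i : i < D -> 0 < b i.
Proof.
move=> /exists_dist[x [y dxy]].
have [z ezy dxz] := dist_last_edge dxy.
have [_ _] := e_dr z x; rewrite dist_sym dxz => <-.
by apply/card_gt0P; exists y; rewrite !inE ezy dist_sym dxy eqxx.
Qed.

Lemma a_dist_gt0 x y t : e x t -> dist e t y = dist e x y -> 0 < a (dist e x y).
Proof.
move=> ext dty; have [_ <- _] := e_dr x y.
by apply/card_gt0P; exists t; rewrite !inE ext dty eqxx.
Qed.

(* For d(x0, y) = i + 1, take x1 ~ x0 on a geodesic to y and z ~ y on a geodesic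
   to x1; a common neighbour t of x0 and x1 has d(t, z) = i or i - 1, and then t
   witnesses a_i at (x0, z) or at (x1, y) respectively. *)
Lemma a_gt0_drg i : a 1 <> 0 -> 0 < i < D -> 0 < a i.
Proof.
move=> a1_neq0 /andP[i_gt0 /exists_dist[x0 [y dx0y]]].
have [x1 ex0x1 dx1y] := dist_first_edge dx0y.
have [z eyz dzx1] : exists2 z, e y z & dist e z x1 = i.-1.
  by apply: dist_first_edge; rewrite dist_sym dx1y prednK.
have ex1x0 : e x1 x0 by rewrite e_sym.
have ezy : e z y by rewrite e_sym.
have dx0z : dist e x0 z = i.
  have := dist_edge_r z ex1x0; have := dist_edge_r x0 ezy.
  by rewrite [dist e z x0]dist_sym dzx1 dx0y; lia.
have [t ex0t etx1] : exists2 t, e x0 t & e t x1.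
  have [_ + _] := e_dr x0 x1; have /eqP -> : dist e x0 x1 == 1 by rewrite dist_eq1.
  move=> a1E; have /card_gt0P[t] : 0 < #|[set t | e x0 t & dist e t x1 == 1]|.
    by rewrite a1E lt0n; apply/eqP.
  by rewrite !inE dist_eq1 => /andP[]; exists t.
have := dist_edge_l z etx1; have := dist_edge_l z ex0t.
rewrite [dist e x1 z]dist_sym dzx1 dx0z => ge_tz le_tz.
have [dtz | dtz] : dist e t z = i \/ dist e t z = i.-1 by lia.
  by rewrite -dx0z; apply: (a_dist_gt0 ex0t); rewrite dtz.
rewrite -dx1y; apply: (a_dist_gt0 (_ : e x1 t)); first by rewrite e_sym.
have := dist_edge_r t ezy; have := dist_edge_l y ex0t.
by rewrite dx0y dx1y [dist e t z]dtz; lia.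
Qed.

Lemma intersection_numbers_drg : a 1 <> 0 -> intersection_numbers D c a b.
Proof.
move=> a1_neq0; split; [exact: cab_sum_drg | exact: c0_drg | exact: a0_drg | exact: c1_drg |
  exact: c_gt0_drg | exact: b_gt0_drg | by move=> i; apply: a_gt0_drg].
Qed.
End DistanceRegular.
End Distance.

Local Open Scope ring_scope.

(* [x], [y], [z] stand for sigma_{i-1}, sigma_i, sigma_{i+1}, and [p], [q], [w]
   for the corresponding terms of rho; [sg], [t], [e] are sigma_1, sigma_2, eps. *)
Section ThreeTermAlgebra.
Variable F : fieldType.
Implicit Types x y z sg t e m k a b c p q w r : F.

Lemma eq_iff_subr x y u v : x - y = u - v -> (x = y <-> u = v).
Proof. by move=> E; split=> H; apply: subr0_eq; [rewrite -E | rewrite E]; rewrite H subrr. Qed.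

Lemma rec_iff_b_eq x y z sg e m k a b c :
  z - y != 0 -> x - y != 0 ->
  a = (e - 1) * m * ((z - sg * y) * (x - sg * y)) / ((z - y) * (x - y)) ->
  k = (e - sg) * m -> k = c + a + b ->
  c * x + a * y + b * z = k * sg * y <->
  b * (x - z) = (1 - sg) * m * ((x - sg * y) * (z - e * y)) / (z - y).
Proof.
move=> zy xy aE kE kS.
have E : c * x + a * y + b * z - k * sg * y =
    (1 - sg) * m * ((x - sg * y) * (z - e * y)) / (z - y) - b * (x - z).
  have -> : c = k - a - b by rewrite kS; ring.
  by rewrite kE aE; field; rewrite zy xy.
by apply: iff_trans (eq_iff_subr E) _; split=> /esym.
Qed.

Lemma rec_iff_c_eq x y z sg e m k a b c :
  z - y != 0 -> x - y != 0 ->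
  a = (e - 1) * m * ((z - sg * y) * (x - sg * y)) / ((z - y) * (x - y)) ->
  k = (e - sg) * m -> k = c + a + b ->
  c * x + a * y + b * z = k * sg * y <->
  c * (z - x) = (1 - sg) * m * ((z - sg * y) * (x - e * y)) / (x - y).
Proof.
move=> zy xy aE kE kS.
have aE' : a = (e - 1) * m * ((x - sg * y) * (z - sg * y)) / ((x - y) * (z - y)).
  by rewrite aE [(z - sg * y) * _]mulrC [(z - y) * _]mulrC.
have kS' : k = b + a + c by rewrite kS; ring.
have -> : c * x + a * y + b * z = b * z + a * y + c * x by ring.
exact: rec_iff_b_eq xy zy aE' kE kS'.
Qed.

(* [q * aux_poly] is the recurrence [c p + a q + b w = k r q] multiplied by
   [(x - e y) (z - e y)], with [p] and [w] eliminated through the auxiliary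
   relations [q (y - e x) = p (x - e y)] and [w (z - e y) = q (y - e z)]. *)
Definition aux_poly x y z e k a b c r :=
  c * (y - e * x) * (z - e * y) + a * (x - e * y) * (z - e * y)
  + b * (x - e * y) * (y - e * z) - k * r * (x - e * y) * (z - e * y).

Lemma aux_poly_eq0 x y z e k a b c r p q w :
  c != 0 -> p != 0 \/ q != 0 ->
  c * p + a * q + b * w = k * r * q ->
  q * (y - e * x) = p * (x - e * y) -> w * (z - e * y) = q * (y - e * z) ->
  aux_poly x y z e k a b c r = 0.
Proof.
move=> c_neq0 pq_neq0 r_rec aux_x aux_z.
have E : q * aux_poly x y z e k a b c r =
    (x - e * y) * (z - e * y) * (c * p + a * q + b * w - k * r * q)
    + c * (z - e * y) * (q * (y - e * x) - p * (x - e * y))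
    - b * (x - e * y) * (w * (z - e * y) - q * (y - e * z)).
  by rewrite /aux_poly; ring.
rewrite r_rec aux_x aux_z !subrr !mulr0 addr0 subr0 in E.
have [q0 | q_neq0] := eqVneq q 0; last by move/eqP: E; rewrite mulf_eq0 (negbTE q_neq0) => /eqP.
have p_neq0 : p != 0 by case: pq_neq0; rewrite // q0 eqxx.
have xe0 : x - e * y = 0.
  by move: aux_x; rewrite q0 mul0r => /esym/eqP; rewrite mulf_eq0 (negbTE p_neq0) => /eqP.
have ze0 : z - e * y = 0.
  apply/eqP/contraT => ze_neq0.
  have w0 : w = 0 by move/eqP: aux_z; rewrite q0 mul0r mulf_eq0 (negbTE ze_neq0) orbF => /eqP.
  move: r_rec; rewrite q0 w0 !mulr0 !addr0 => /eqP.
  by rewrite mulf_eq0 (negbTE c_neq0) (negbTE p_neq0).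
by rewrite /aux_poly xe0 ze0; ring.
Qed.

Lemma aux_next x y z e k a b c r p q w :
  b != 0 -> c != 0 -> x - y != 0 -> 1 - e ^+ 2 != 0 ->
  aux_poly x y z e k a b c r = 0 ->
  c * p + a * q + b * w = k * r * q ->
  q * (y - e * x) = p * (x - e * y) -> w * (z - e * y) = q * (y - e * z).
Proof.
move=> b_neq0 c_neq0 xy_neq0 e2_neq1 poly0 r_rec aux_x; apply: subr0_eq.
have E : b * (x - e * y) * (w * (z - e * y) - q * (y - e * z)) =
    (x - e * y) * (z - e * y) * (c * p + a * q + b * w - k * r * q)
    + c * (z - e * y) * (q * (y - e * x) - p * (x - e * y))
    - q * aux_poly x y z e k a b c r.
  by rewrite /aux_poly; ring.
rewrite r_rec aux_x poly0 !subrr !mulr0 addr0 subr0 in E.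
have [xe0 | xe_neq0] := eqVneq (x - e * y) 0; last first.
  by move/eqP: E; rewrite !mulf_eq0 (negbTE b_neq0) (negbTE xe_neq0) => /eqP.
have x_ey : x = e * y := subr0_eq xe0.
have y_neq0 : y != 0 by apply: contraNneq xy_neq0 => y0; rewrite x_ey y0 mulr0 subrr.
have ze0 : z - e * y = 0.
  have : c * y * (1 - e ^+ 2) * (z - e * y) = 0 by rewrite -poly0 /aux_poly x_ey; ring.
  by move/eqP; rewrite !mulf_eq0 (negbTE c_neq0) (negbTE y_neq0) (negbTE e2_neq1) => /eqP.
have : q * (y * (1 - e ^+ 2)) = p * (x - e * y) by rewrite -aux_x x_ey; ring.
rewrite xe0 mulr0 => /eqP; rewrite !mulf_eq0 (negbTE y_neq0) (negbTE e2_neq1) !orbF => /eqP q0.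
by rewrite ze0 q0 mulr0 mul0r subrr.
Qed.

Lemma aux_poly_a_relation x y z sg e k a b c r :
  k = c + a + b -> c * x + a * y + b * z = k * sg * y -> r * (sg - e) = 1 - e * sg ->
  (sg - e) * aux_poly x y z e k a b c r =
  (1 + e) * (a * (x - y) * (z - y) * (sg - e) - k * (1 - e) * (z - sg * y) * (x - sg * y)).
Proof.
move=> kS s_rec rE; apply: subr0_eq.
have E : (sg - e) * aux_poly x y z e k a b c r -
    (1 + e) * (a * (x - y) * (z - y) * (sg - e) - k * (1 - e) * (z - sg * y) * (x - sg * y)) =
    - (sg - e) * (1 - e ^+ 2) * y * (c * x + a * y + b * z - k * sg * y)
    - k * (x - e * y) * (z - e * y) * (r * (sg - e) - (1 - e * sg)).
  by rewrite /aux_poly (_ : c = k - a - b); [ring | rewrite kS; ring].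
by rewrite E s_rec rE !subrr; ring.
Qed.

Lemma a_relation_iff x y z sg e m k a :
  z - y != 0 -> x - y != 0 -> sg - e != 0 -> k = (e - sg) * m ->
  a * (x - y) * (z - y) * (sg - e) = k * (1 - e) * (z - sg * y) * (x - sg * y) <->
  a = (e - 1) * m * ((z - sg * y) * (x - sg * y)) / ((z - y) * (x - y)).
Proof.
move=> zy xy se kE.
have nz : (sg - e) * (z - y) * (x - y) != 0 by rewrite !mulf_neq0.
have E : a * (x - y) * (z - y) * (sg - e) - k * (1 - e) * (z - sg * y) * (x - sg * y) =
    (sg - e) * (z - y) * (x - y) *
    (a - (e - 1) * m * ((z - sg * y) * (x - sg * y)) / ((z - y) * (x - y))).
  by rewrite kE; field; rewrite zy xy.
split=> [aR | aE]; apply/eqP; rewrite -subr_eq0; last by rewrite E aE subrr mulr0.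
by move/eqP: aR; rewrite -subr_eq0 E mulf_eq0 (negbTE nz).
Qed.

Lemma tight_product_rec x y z p q w sg r e k a b c :
  k = c + a + b ->
  c * x + a * y + b * z = k * sg * y -> c * p + a * q + b * w = k * r * q ->
  q * (y - e * x) = p * (x - e * y) -> w * (z - e * y) = q * (y - e * z) ->
  r * (sg - e) = 1 - e * sg ->
  c * (x * p) + a * (y * q) + b * (z * w) = k * (sg * r) * (y * q).
Proof.
move=> kS s_rec r_rec aux_x aux_z rE; apply: subr0_eq.
have k0 : k - (c + a + b) = 0 by rewrite kS subrr.
have -> : c * (x * p) + a * (y * q) + b * (z * w) - k * (sg * r) * (y * q) =
    - c * (q * (y - e * x) - p * (x - e * y)) + b * (w * (z - e * y) - q * (y - e * z))
    + e * y * (c * p + a * q + b * w - k * r * q) - e * q * (c * x + a * y + b * z - k * sg * y)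
    - y * q * (k - (c + a + b)) - k * y * q * (r * (sg - e) - (1 - e * sg)) by ring.
by rewrite aux_x aux_z r_rec s_rec rE k0 !subrr; ring.
Qed.

Lemma a_relation_rec_neq x y z sg e k a b c :
  k != 0 -> 1 - e != 0 -> 1 - sg != 0 -> c + a != 0 -> x != 0 \/ y != 0 ->
  k = c + a + b ->
  a * (x - y) * (z - y) * (sg - e) = k * (1 - e) * (z - sg * y) * (x - sg * y) ->
  c * x + a * y + b * z = k * sg * y -> x - y != 0.
Proof.
move=> k_neq0 e_neq1 sg_neq1 ca_neq0 xy_neq0 kS aR s_rec; apply/eqP => xy0.
have x_y : x = y := subr0_eq xy0.
suff y0 : y = 0 by case: xy_neq0; rewrite ?x_y y0 eqxx.
have E : k * (1 - e) * (1 - sg) * (y * (z - sg * y)) =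
    k * (1 - e) * (z - sg * y) * (x - sg * y) by rewrite x_y; ring.
rewrite -aR xy0 mulr0 !mul0r in E.
move/eqP: E; rewrite !mulf_eq0 (negbTE k_neq0) (negbTE e_neq1) (negbTE sg_neq1) /=.
case/orP=> [/eqP // | /eqP/subr0_eq z_sgy].
have : (c + a) * (1 - sg) * y = 0.
  by rewrite -(subrr (k * sg * y)) -{1}s_rec x_y z_sgy kS; ring.
by move/eqP; rewrite !mulf_eq0 (negbTE ca_neq0) (negbTE sg_neq1) => /eqP.
Qed.

Section Valency.
Variables (sg t e : F).
Hypotheses (sg_neq1 : 1 - sg != 0) (t_neq_sg : t - sg != 0).
Hypotheses (sg2_neq_t : sg ^+ 2 - t != 0) (esg_neq1 : 1 - e * sg != 0).
Let m := (1 - t) / ((sg ^+ 2 - t) * (1 - e * sg)).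

Lemma rec1_linear k a b :
  1 + a * sg + b * t = k * sg * sg -> k = 1 + a + b ->
  k * (sg ^+ 2 - t) = 1 - t + a * (sg - t).
Proof.
move=> s_rec kS; apply: subr0_eq.
have -> : k * (sg ^+ 2 - t) - (1 - t + a * (sg - t)) =
  (k * sg * sg - (1 + a * sg + b * t)) - t * (k - (1 + a + b)) by ring.
by rewrite -s_rec -kS !subrr mulr0 subr0.
Qed.

Lemma valency_rec1 k a b :
  a = (e - 1) * m * ((t - sg * sg) * (1 - sg * sg)) / ((t - sg) * (1 - sg)) ->
  1 + a * sg + b * t = k * sg * sg -> k = 1 + a + b -> k = (e - sg) * m.
Proof.
move=> aE s_rec kS; have L := rec1_linear s_rec kS.
have -> : k = (1 - t + a * (sg - t)) / (sg ^+ 2 - t) by rewrite -L mulfK.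
by rewrite aE /m; field; rewrite sg_neq1 t_neq_sg sg2_neq_t esg_neq1.
Qed.

Lemma valency_b1 k a b :
  1 - t != 0 ->
  a = (e - 1) * m * ((t - sg * sg) * (1 - sg * sg)) / ((t - sg) * (1 - sg)) ->
  b * (1 - t) = (1 - sg) * m * ((1 - sg * sg) * (t - e * sg)) / (t - sg) ->
  k = 1 + a + b -> k = (e - sg) * m.
Proof.
move=> t_neq1 aE bE ->.
have -> : b = (1 - sg) * m * ((1 - sg * sg) * (t - e * sg)) / (t - sg) / (1 - t).
  by rewrite -bE mulfK.
by rewrite aE /m; field; rewrite sg_neq1 t_neq_sg sg2_neq_t esg_neq1 t_neq1.
Qed.

Lemma valency_a_relation1 k a b :
  sg - e != 0 ->
  1 + a * sg + b * t = k * sg * sg -> k = 1 + a + b ->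
  a * (1 - sg) * (t - sg) * (sg - e) = k * (1 - e) * (t - sg * sg) * (1 - sg * sg) ->
  k = (e - sg) * m.
Proof.
move=> sg_neq_e s_rec kS aR; have L := rec1_linear s_rec kS.
have aE : a = k * (1 - e) * (t - sg * sg) * (1 - sg * sg) / ((1 - sg) * (t - sg) * (sg - e)).
  by rewrite -aR; field; rewrite sg_neq1 t_neq_sg sg_neq_e.
have E : k * ((sg ^+ 2 - t) * (1 - e * sg)) = (1 - t) * (e - sg).
  apply: subr0_eq; have -> : k * ((sg ^+ 2 - t) * (1 - e * sg)) - (1 - t) * (e - sg) =
    - (sg - e) * (k * (sg ^+ 2 - t) - (1 - t + a * (sg - t))).
    by rewrite aE; field; rewrite sg_neq1 t_neq_sg sg_neq_e.
  by rewrite L subrr mulr0.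
have nz : (sg ^+ 2 - t) * (1 - e * sg) != 0 by rewrite mulf_neq0.
by apply: (mulIf nz); rewrite E /m; field; rewrite sg2_neq_t esg_neq1.
Qed.
End Valency.
End ThreeTermAlgebra.

Section PseudoCosine.
Variables (R : realFieldType) (D : nat) (c a b : nat -> nat).
Hypotheses (ia : intersection_numbers D c a b) (D_ge3 : (3 <= D)%N).

Local Notation k := ((b 0)%:R : R).

Definition cosine_rec (u : nat -> R) i :=
  (c i)%:R * u i.-1 + (a i)%:R * u i + (b i)%:R * u i.+1 = k * u 1%N * u i.

Lemma pcsE u : pcs D c a b u <-> u 0%N = 1 /\ forall i, (0 < i < D)%N -> cosine_rec u i.
Proof.
split=> [[th [u0 u_rec]] | [u0 u_rec]].
  have th_k : th = k * u 1%N.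
    have := u_rec 0%N ltac:(lia); rewrite (c0_eq0 ia) (a0_eq0 ia) u0 => E.
    by rewrite -[th]mulr1 -E; ring.
  by split=> // i /andP[_ lt_iD]; rewrite /cosine_rec -th_k; apply: u_rec.
exists (k * u 1%N); split=> // -[_ | i lt_iD]; last by apply: u_rec.
by rewrite (c0_eq0 ia) (a0_eq0 ia) u0; ring.
Qed.

Lemma valencyE i : (i <= D)%N -> k = (c i)%:R + (a i)%:R + (b i)%:R.
Proof. by move/(cab_sum ia) <-; rewrite !natrD. Qed.

Lemma c_neq0 i : (0 < i <= D)%N -> (c i)%:R != 0 :> R.
Proof. by move/(c_gt0 ia); rewrite pnatr_eq0 -lt0n. Qed.

Lemma b_neq0 i : (i < D)%N -> (b i)%:R != 0 :> R.
Proof. by move/(b_gt0 ia); rewrite pnatr_eq0 -lt0n. Qed.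

Lemma a_neq0 i : (0 < i < D)%N -> (a i)%:R != 0 :> R.
Proof. by move/(a_gt0 ia); rewrite pnatr_eq0 -lt0n. Qed.

Lemma valency_neq0 : k != 0.
Proof. by apply: b_neq0; lia. Qed.

Lemma cosine_consecutive_neq0 u : u 0%N = 1 -> (forall i, (0 < i < D)%N -> cosine_rec u i) ->
  forall j, (j < D)%N -> u j != 0 \/ u j.+1 != 0.
Proof.
move=> u0 u_rec; elim=> [|j IHj] lt_jD; first by left; rewrite u0 oner_neq0.
have [uj1 | ] := eqVneq (u j.+1) 0; last by left.
right; apply/eqP => uj2; case: (IHj (ltnW lt_jD)) => /negP; last by rewrite uj1 eqxx.
have := u_rec j.+1 ltac:(lia); rewrite /cosine_rec /= uj1 uj2 !mulr0 !addr0 => /eqP.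
by rewrite mulf_eq0 (negbTE (c_neq0 _)) //; lia.
Qed.

Lemma no_alternating_cosine_pair u v :
  u 0%N = 1 -> v 0%N = 1 -> u 1%N != 1 ->
  (forall i, (0 < i < D)%N -> cosine_rec u i) -> (forall i, (0 < i < D)%N -> cosine_rec v i) ->
  ~ (forall i, (0 < i <= 3)%N -> (u i - u i.-1) * (v i + v i.-1) = 0).
Proof.
move=> u0 v0 u1_neq1 u_rec v_rec steps.
have a1_gt0 : 0 < (a 1%N)%:R :> R by rewrite ltr0n (a_gt0 ia) //; lia.
have b1_gt0 : 0 < (b 1%N)%:R :> R by rewrite ltr0n (b_gt0 ia) //; lia.
have c2_gt0 : 0 < (c 2%N)%:R :> R by rewrite ltr0n (c_gt0 ia) //; lia.
have a2_ge0 : 0 <= (a 2%N)%:R :> R by rewrite ler0n.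
have k1 := @valencyE 1%N ltac:(lia); rewrite (c1_eq1 ia) in k1.
have k2 := @valencyE 2%N ltac:(lia).
have v1 : v 1%N = -1.
  move/eqP: (steps 1%N isT); rewrite /= u0 mulf_eq0 subr_eq0 (negbTE u1_neq1) v0.
  by rewrite addr_eq0 => /eqP.
have v2_gt1 : 1 < v 2%N.
  have := v_rec 1%N ltac:(lia); rewrite /cosine_rec /= v0 v1 (c1_eq1 ia) k1; nra.
have u2 : u 2%N = u 1%N.
  move/eqP: (steps 2%N isT); rewrite /= v1 mulf_eq0 subr_eq0 => /orP[/eqP // | ].
  by rewrite addr_eq0 opprK => /eqP v2; move: v2_gt1; rewrite v2 ltxx.
have u1_neq0 : u 1%N != 0.
  apply/eqP => u1; have := u_rec 1%N ltac:(lia).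
  by rewrite /cosine_rec /= u0 u2 u1 (c1_eq1 ia) !mulr0 !addr0 mulr1 => /eqP; rewrite oner_eq0.
have u3 : u 3%N != u 2%N.
  apply/eqP => u3; have := u_rec 2%N ltac:(lia); rewrite /cosine_rec /= u3 u2 k2 => /eqP.
  rewrite -subr_eq0 (_ : _ - _ = ((c 2%N)%:R + (a 2%N)%:R + (b 2%N)%:R) * u 1%N * (1 - u 1%N)).
    rewrite !mulf_eq0 -k2 (negbTE valency_neq0) (negbTE u1_neq0).
    by rewrite subr_eq0 eq_sym (negbTE u1_neq1).
  by ring.
have v3 : v 3%N = - v 2%N.
  move/eqP: (steps 3%N isT); rewrite /= mulf_eq0 subr_eq0 (negbTE u3) addr_eq0.
  by move=> /eqP.
have := v_rec 2%N ltac:(lia); rewrite /cosine_rec /= v1 v3 k2; nra.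
Qed.

Definition aux_rel (s r : nat -> R) eps i :=
  r i * (s i - eps * s i.-1) = r i.-1 * (s i.-1 - eps * s i).

Lemma aux_paramE s r eps :
  aux_param D s r eps <-> forall i, (0 < i <= D)%N -> aux_rel s r eps i.
Proof.
have E i : s i * r i - s i.-1 * r i.-1 - eps * (s i.-1 * r i - s i * r i.-1) =
    r i * (s i - eps * s i.-1) - r i.-1 * (s i.-1 - eps * s i) by ring.
by split=> aux i /aux /(eq_iff_subr (E i)).
Qed.

Fixpoint cosine_pair (rho : R) n : R * R :=
  if n is n'.+1 then
    let p := cosine_pair rho n' in
    (p.2, (k * rho * p.2 - (c n)%:R * p.1 - (a n)%:R * p.2) / (b n)%:R)
  else (1, rho).

Definition cosine_seq rho n := (cosine_pair rho n).1.

Lemma cosine_seq0 rho : cosine_seq rho 0 = 1.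
Proof. by []. Qed.

Lemma cosine_seq1 rho : cosine_seq rho 1 = rho.
Proof. by []. Qed.

Lemma cosine_seqSS rho n : cosine_seq rho n.+2 =
  (k * rho * cosine_seq rho n.+1 - (c n.+1)%:R * cosine_seq rho n
    - (a n.+1)%:R * cosine_seq rho n.+1) / (b n.+1)%:R.
Proof. by []. Qed.

Lemma cosine_seq_rec rho i : (0 < i < D)%N -> cosine_rec (cosine_seq rho) i.
Proof.
case: i => // i lt_iD; rewrite /cosine_rec cosine_seq1 cosine_seqSS.
by field; apply: b_neq0; lia.
Qed.

Lemma aux_tight_pair s r eps : pcs D c a b s -> pcs D c a b r ->
  (forall i, (0 < i <= D)%N -> aux_rel s r eps i) -> pcs D c a b (fun i => s i * r i).
Proof.
move=> /pcsE[s0 s_rec] /pcsE[r0 r_rec] aux; apply/pcsE.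
split=> [|i lt_iD]; first by rewrite s0 r0 mulr1.
have rE : r 1%N * (s 1%N - eps) = 1 - eps * s 1%N.
  by have := aux 1%N ltac:(lia); rewrite /aux_rel /= s0 r0 mulr1 mul1r.
have kS := @valencyE i ltac:(lia).
have aux_i : aux_rel s r eps i by apply: aux; lia.
have aux_i1 : aux_rel s r eps i.+1 by apply: aux; lia.
exact: tight_product_rec kS (s_rec i lt_iD) (r_rec i lt_iD) aux_i aux_i1 rE.
Qed.

(* [gA s eps = (eps - 1) mu s eps], [hB s eps = (1 - s 1) mu s eps], and
   Condition A forces the valency to be [(eps - s 1) mu s eps]. *)
Definition mu (s : nat -> R) eps := (1 - s 2%N) / ((s 1%N ^+ 2 - s 2%N) * (1 - eps * s 1%N)).

Lemma gAE s eps : gA s eps = (eps - 1) * mu s eps.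
Proof. by rewrite /gA /mu mulrA. Qed.

Lemma hBE s eps : hB s eps = (1 - s 1%N) * mu s eps.
Proof. by rewrite /hB /mu mulrA. Qed.

Section ConditionA.
Variables (s : nat -> R) (eps : R).
Hypotheses (s0 : s 0%N = 1) (hA : condA D a s eps).

Lemma condA_nondegenerate : [/\ 1 - s 1%N != 0, s 2%N - s 1%N != 0, 1 - s 2%N != 0 & eps - 1 != 0].
Proof.
case: hA => _ _ _ /(_ 1%N ltac:(lia)); rewrite /= s0 => -[-> -> aE].
have : (eps - 1) * mu s eps != 0.
  by apply: contraTneq (@a_neq0 1%N ltac:(lia)) => g0; rewrite aE gAE g0 !mul0r eqxx.
by rewrite mulf_eq0 negb_or /mu mulf_eq0 negb_or => /andP[-> /andP[->]].
Qed.

Lemma condA_rec_iff_b i : k = (eps - s 1%N) * mu s eps -> (0 < i < D)%N ->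
  cosine_rec s i <-> (b i)%:R * (s i.-1 - s i.+1) =
    hB s eps * ((s i.-1 - s 1%N * s i) * (s i.+1 - eps * s i)) / (s i.+1 - s i).
Proof.
move=> kE lt_iD; case: hA => _ _ _ /(_ i ltac:(lia)) [zy xy]; rewrite gAE hBE => aE.
exact: rec_iff_b_eq zy xy aE kE (@valencyE i ltac:(lia)).
Qed.

Lemma condA_rec_iff_c i : k = (eps - s 1%N) * mu s eps -> (0 < i < D)%N ->
  cosine_rec s i <-> (c i)%:R * (s i.+1 - s i.-1) =
    hB s eps * ((s i.+1 - s 1%N * s i) * (s i.-1 - eps * s i)) / (s i.-1 - s i).
Proof.
move=> kE lt_iD; case: hA => _ _ _ /(_ i ltac:(lia)) [zy xy]; rewrite gAE hBE => aE.
exact: rec_iff_c_eq zy xy aE kE (@valencyE i ltac:(lia)).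
Qed.

Lemma condA_valency_rec : cosine_rec s 1 -> k = (eps - s 1%N) * mu s eps.
Proof.
have [s1 ts _ _] := condA_nondegenerate.
case: hA => _ sg2t esg /(_ 1%N ltac:(lia)); rewrite /= s0 gAE => -[_ _ aE].
have kS := @valencyE 1%N ltac:(lia); rewrite (c1_eq1 ia) mulr1n in kS.
rewrite /cosine_rec /= s0 (c1_eq1 ia) mulr1 mulr1n => s_rec.
exact: (valency_rec1 s1 ts sg2t esg aE s_rec kS).
Qed.

Lemma condA_valency_condB : condB D b s eps -> k = (eps - s 1%N) * mu s eps.
Proof.
have [s1 ts t1 _] := condA_nondegenerate.
case: hA => _ sg2t esg /(_ 1%N ltac:(lia)); rewrite /= s0 gAE => -[_ _ aE].
case=> _ _ /(_ 1%N ltac:(lia)); rewrite /= s0 hBE => -[_ bE].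
have kS := @valencyE 1%N ltac:(lia); rewrite (c1_eq1 ia) mulr1n in kS.
exact: (valency_b1 s1 ts sg2t esg t1 aE bE kS).
Qed.
End ConditionA.

Lemma condC_valency s eps : condC D c b s eps -> k = (eps - s 1%N) * mu s eps.
Proof. by case=> sg2t esg s1 -> _; rewrite hBE /mu; field; rewrite sg2t esg s1. Qed.

Lemma nontrivial_condA_iff_condB (s : nat -> R) eps : s 0%N = 1 ->
  (nontrivial_pcs D c a b s /\ condA D a s eps) <-> (condA D a s eps /\ condB D b s eps).
Proof.
move=> s0; split=> [[[/pcsE[_ s_rec] _] hA] | [hA hB]].
  have kE := condA_valency_rec s0 hA (@s_rec 1%N ltac:(lia)).
  split=> //; case: (hA) => _ sg2t esg hA'; split=> // i le_iD.
  have lt_iD : (0 < i < D)%N by lia.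
  by have [zy _ _] := hA' i le_iD; split; last by apply/(condA_rec_iff_b hA kE lt_iD)/s_rec.
have kE := condA_valency_condB s0 hA hB.
split=> //; split; last first.
  by have [s1 _ _ _] := condA_nondegenerate s0 hA; apply: contraNneq s1 => ->; rewrite subrr.
apply/pcsE; split=> // i lt_iD; case: hB => _ _ /(_ i ltac:(lia)) [_ bE].
exact/(condA_rec_iff_b hA kE lt_iD).
Qed.

Lemma condB_iff_condC (s : nat -> R) eps : s 0%N = 1 ->
  (condA D a s eps /\ condB D b s eps) <-> (condA D a s eps /\ condC D c b s eps).
Proof.
move=> s0; split=> [[hA hB] | [hA hC]]; split=> //.
  have kE := condA_valency_condB s0 hA hB.
  have [s1 _ _ _] := condA_nondegenerate s0 hA.
  have s1' : s 1%N - 1 != 0 by rewrite -opprB oppr_eq0.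
  case: (hA) (hB) => _ sg2t esg hA' [_ _ hB'].
  split=> //; first by rewrite kE hBE /mu; field; rewrite sg2t esg s1'.
  move=> i le_iD; have lt_iD : (0 < i < D)%N by lia.
  have [_ xy _] := hA' i le_iD; split=> //.
  by apply/(condA_rec_iff_c hA kE lt_iD)/(condA_rec_iff_b hA kE lt_iD); case: (hB' i le_iD).
have kE := condC_valency hC.
case: (hA) (hC) => _ sg2t esg hA' [_ _ _ _ hC'].
split=> // i le_iD; have lt_iD : (0 < i < D)%N by lia.
have [zy _ _] := hA' i le_iD; split=> //.
by apply/(condA_rec_iff_b hA kE lt_iD)/(condA_rec_iff_c hA kE lt_iD); case: (hC' i le_iD).
Qed.

Section AuxFromConditionA.
Variables (s : nat -> R) (eps : R).
Hypotheses (s0 : s 0%N = 1) (s_rec : forall i, (0 < i < D)%N -> cosine_rec s i).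
Hypothesis hA : condA D a s eps.

Let kE : k = (eps - s 1%N) * mu s eps.
Proof. by apply: condA_valency_rec s0 hA (s_rec _); lia. Qed.

Lemma condA_sg_neq_eps : s 1%N - eps != 0.
Proof.
apply: contraNneq valency_neq0 => sg_eps.
by rewrite kE -opprB sg_eps oppr0 mul0r.
Qed.

Lemma condA_aux (r : nat -> R) : r 0%N = 1 -> r 1%N * (s 1%N - eps) = 1 - eps * s 1%N ->
  (forall i, (0 < i < D)%N -> cosine_rec r i) ->
  forall i, (0 < i <= D)%N -> aux_rel s r eps i.
Proof.
move=> r0 rE r_rec; have [_ _ _ e_neq1] := condA_nondegenerate s0 hA.
case: hA => e_neqN1 _ _ hA'.
have e2_neq1 : 1 - eps ^+ 2 != 0.
  rewrite (_ : 1 - eps ^+ 2 = (1 - eps) * (1 + eps)); last by ring.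
  by apply: mulf_neq0; [rewrite -opprB oppr_eq0 | rewrite addrC addr_eq0].
elim=> // -[_ _ | i IHi lt_iD]; first by rewrite /aux_rel /= s0 r0 mulr1 mul1r.
have lt_iD' : (0 < i.+1 < D)%N by lia.
have [zy xy aE] := hA' i.+1 ltac:(lia); rewrite gAE in aE.
have kS := @valencyE i.+1 ltac:(lia).
have aR := (a_relation_iff _ zy xy condA_sg_neq_eps kE).2 aE.
have := aux_poly_a_relation kS (s_rec lt_iD') rE; rewrite aR subrr mulr0 => /eqP.
rewrite mulf_eq0 (negbTE condA_sg_neq_eps) => /eqP poly0.
apply: aux_next poly0 (r_rec _ lt_iD') (IHi ltac:(lia)); rewrite ?b_neq0 ?c_neq0 //; lia.
Qed.
End AuxFromConditionA.

Lemma condA_tight (s : nat -> R) eps :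
  nontrivial_pcs D c a b s -> condA D a s eps -> tight_with_aux D c a b s eps.
Proof.
move=> s_nt hA; have [/pcsE[s0 s_rec] s1_neq1] := s_nt.
have sg_neq_e := condA_sg_neq_eps s0 s_rec hA.
set rho := (1 - eps * s 1%N) / (s 1%N - eps).
have rE : rho * (s 1%N - eps) = 1 - eps * s 1%N by rewrite mulfVK.
have r_rec := @cosine_seq_rec rho.
have aux := condA_aux s0 s_rec hA (cosine_seq0 rho) rE r_rec.
have rho_neq1 : rho != 1.
  have e1 : 1 + eps != 0 by rewrite addrC addr_eq0; case: hA.
  apply: contraNneq s1_neq1 => rho1; move: rE; rewrite rho1 mul1r => /eqP.
  rewrite -subr_eq0 (_ : _ - _ = (1 + eps) * (s 1%N - 1)); last by ring.
  by rewrite mulf_eq0 (negbTE e1) subr_eq0.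
have r_pcs : pcs D c a b (cosine_seq rho) by apply/pcsE.
split=> //; exists (cosine_seq rho); split=> //; last exact/aux_paramE.
by split=> //; [case: s_nt | apply: aux_tight_pair (s_nt.1) r_pcs aux].
Qed.

Definition a_relation (s : nat -> R) eps i :=
  (a i)%:R * (s i.-1 - s i) * (s i.+1 - s i) * (s 1%N - eps) =
  k * (1 - eps) * (s i.+1 - s 1%N * s i) * (s i.-1 - s 1%N * s i).

Section ConditionAFromAux.
Variables (s r : nat -> R) (eps : R).
Hypotheses (s_nt : nontrivial_pcs D c a b s) (r_nt : nontrivial_pcs D c a b r).
Hypothesis aux : forall i, (0 < i <= D)%N -> aux_rel s r eps i.

Let s0 : s 0%N = 1. Proof. by case: s_nt => /pcsE[]. Qed.

Let r0 : r 0%N = 1. Proof. by case: r_nt => /pcsE[]. Qed.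

Let s_rec i : (0 < i < D)%N -> cosine_rec s i.
Proof. by move=> lt_iD; case: s_nt => /pcsE[_ /(_ i lt_iD)]. Qed.

Let r_rec i : (0 < i < D)%N -> cosine_rec r i.
Proof. by move=> lt_iD; case: r_nt => /pcsE[_ /(_ i lt_iD)]. Qed.

Lemma aux_eps_neq1 : eps != 1.
Proof.
apply/eqP => e1; apply: (no_alternating_cosine_pair s0 r0 s_nt.2 s_rec r_rec) => i le_i3.
have /aux : (0 < i <= D)%N by lia.
rewrite /aux_rel e1 !mul1r => E.
have -> : (s i - s i.-1) * (r i + r i.-1) = r i * (s i - s i.-1) - r i.-1 * (s i.-1 - s i) by ring.
by rewrite E subrr.
Qed.

Lemma aux_eps_neqN1 : eps != -1.
Proof.
apply/eqP => e1; apply: (no_alternating_cosine_pair r0 s0 r_nt.2 r_rec s_rec) => i le_i3.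
have /aux : (0 < i <= D)%N by lia.
rewrite /aux_rel e1 !mulN1r !opprK => E.
have -> : (r i - r i.-1) * (s i + s i.-1) = r i * (s i + s i.-1) - r i.-1 * (s i.-1 + s i) by ring.
by rewrite E subrr.
Qed.

Lemma aux_rho : r 1%N * (s 1%N - eps) = 1 - eps * s 1%N.
Proof. by have := aux (_ : 0 < 1 <= D)%N; rewrite /aux_rel /= s0 r0 mulr1 mul1r; apply; lia. Qed.

Lemma aux_sg_neq_eps : s 1%N - eps != 0.
Proof.
apply/eqP => /subr0_eq sg_eps; move: aux_rho; rewrite sg_eps subrr mulr0 => /esym/eqP.
rewrite (_ : 1 - eps * eps = (1 - eps) * (1 + eps)); last by ring.
rewrite mulf_eq0 subr_eq0 eq_sym (negbTE aux_eps_neq1) addrC addr_eq0.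
by rewrite (negbTE aux_eps_neqN1).
Qed.

Lemma aux_a_relation i : (0 < i < D)%N -> a_relation s eps i.
Proof.
move=> lt_iD; apply: subr0_eq.
have r_nz : r i.-1 != 0 \/ r i != 0.
  have /(cosine_consecutive_neq0 r0 r_rec) : (i.-1 < D)%N by lia.
  by rewrite prednK //; case/andP: lt_iD.
have aux_i : aux_rel s r eps i by apply: aux; lia.
have aux_i1 : aux_rel s r eps i.+1 by apply: aux; lia.
have poly0 := aux_poly_eq0 (@c_neq0 i ltac:(lia)) r_nz (r_rec lt_iD) aux_i aux_i1.
have := aux_poly_a_relation (@valencyE i ltac:(lia)) (s_rec lt_iD) aux_rho.
rewrite poly0 mulr0 => /esym/eqP; rewrite mulf_eq0 addrC addr_eq0 (negbTE aux_eps_neqN1).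
by move/eqP.
Qed.

Lemma aux_neighbours_neq i : (0 < i < D)%N -> s i.-1 - s i != 0 /\ s i.+1 - s i != 0.
Proof.
move=> lt_iD; have aR := aux_a_relation lt_iD; have s_rec_i := s_rec lt_iD.
have kS := @valencyE i ltac:(lia).
have e_neq1 : 1 - eps != 0 by rewrite subr_eq0 eq_sym aux_eps_neq1.
have sg_neq1 : 1 - s 1%N != 0 by rewrite subr_eq0 eq_sym s_nt.2.
have natD_neq0 (m n : nat) : (0 < m)%N -> (m + n)%:R != 0 :> R.
  by move=> m_gt0; rewrite pnatr_eq0 -lt0n ltn_addr.
have s_nz : s i.-1 != 0 \/ s i != 0.
  have /(cosine_consecutive_neq0 s0 s_rec) : (i.-1 < D)%N by lia.
  by rewrite prednK //; case/andP: lt_iD.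
split.
  apply: a_relation_rec_neq valency_neq0 e_neq1 sg_neq1 _ s_nz kS aR s_rec_i.
  by rewrite -natrD natD_neq0 // (c_gt0 ia) //; lia.
have s_nz' : s i.+1 != 0 \/ s i != 0.
  have /(cosine_consecutive_neq0 s0 s_rec) : (i < D)%N by lia.
  by case; [right | left].
apply: (a_relation_rec_neq (x := s i.+1) (z := s i.-1) (a := (a i)%:R)
  (b := (c i)%:R) (c := (b i)%:R)) valency_neq0 e_neq1 sg_neq1 _ s_nz' _ _ _.
- by rewrite -natrD natD_neq0 // (b_gt0 ia) //; lia.
- by rewrite kS; ring.
- by apply: etrans (etrans _ aR) _; ring.
- by apply: etrans (etrans _ s_rec_i) _; ring.
Qed.

(* If eps sigma = 1 then rho_1 = 0, hence sigma_2 = 1, and then the a-relation at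
   i = 2 forces sigma_3 = sigma_2. *)
Lemma aux_esg_neq1 : 1 - eps * s 1%N != 0.
Proof.
apply/eqP => esg0.
have r1 : r 1%N = 0.
  by move/eqP: aux_rho; rewrite esg0 mulf_eq0 (negbTE aux_sg_neq_eps) orbF => /eqP.
have r2 : r 2%N != 0.
  have /(cosine_consecutive_neq0 r0 r_rec) : (1 < D)%N by lia.
  by rewrite r1 eqxx => -[].
have s2 : s 2%N = 1.
  have /aux : (0 < 2 <= D)%N by lia.
  rewrite /aux_rel /= r1 mul0r => /eqP; rewrite mulf_eq0 (negbTE r2) /= subr_eq0 => /eqP ->.
  exact/esym/subr0_eq.
have lt_2D : (0 < 2 < D)%N by lia.
have [_] := aux_neighbours_neq lt_2D; apply/negP.
move: (aux_a_relation lt_2D); rewrite /a_relation /= s2 mulr1 subrr mulr0 => /eqP.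
have s1_neq1 : s 1%N - 1 != 0 by rewrite subr_eq0 s_nt.2.
rewrite !mulf_eq0 (negbTE (a_neq0 lt_2D)) (negbTE s1_neq1) (negbTE aux_sg_neq_eps).
by rewrite orbF negbK.
Qed.
End ConditionAFromAux.

Lemma tight_condA (s : nat -> R) eps : tight_with_aux D c a b s eps -> condA D a s eps.
Proof.
case=> s_nt [r [r_nt _ /aux_paramE aux]]; have [/pcsE[s0 s_rec] s1_neq1] := s_nt.
have sg_neq_e := aux_sg_neq_eps s_nt r_nt aux.
have lt_1D : (0 < 1 < D)%N by lia.
have [_ ts] := aux_neighbours_neq s_nt r_nt aux lt_1D.
have aR1 := aux_a_relation s_nt r_nt aux lt_1D; rewrite /a_relation /= s0 in aR1.
have sg1 : 1 - s 1%N != 0 by rewrite subr_eq0 eq_sym.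
have sg2t : s 1%N ^+ 2 - s 2%N != 0.
  apply: contraNneq (mulf_neq0 (mulf_neq0 (mulf_neq0 (a_neq0 lt_1D) sg1) ts) sg_neq_e).
  move=> sg2t0; have t0 : s 2%N - s 1%N * s 1%N = 0 by rewrite -expr2 -opprB sg2t0 oppr0.
  by rewrite aR1 t0 mulr0 mul0r.
have esg := aux_esg_neq1 s_nt r_nt aux.
have kS := @valencyE 1%N ltac:(lia); rewrite (c1_eq1 ia) mulr1n in kS.
have := s_rec 1%N lt_1D; rewrite /cosine_rec /= s0 (c1_eq1 ia) mulr1 mulr1n => rec1.
have kE := valency_a_relation1 sg1 ts sg2t esg sg_neq_e rec1 kS aR1.
split=> //; first exact: aux_eps_neqN1 s_nt r_nt aux.
move=> i le_iD; have lt_iD : (0 < i < D)%N by lia.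
have [xy zy] := aux_neighbours_neq s_nt r_nt aux lt_iD; split=> //; rewrite gAE.
exact: (a_relation_iff _ zy xy sg_neq_e kE).1 (aux_a_relation s_nt r_nt aux lt_iD).
Qed.
End PseudoCosine.

Theorem theorem14p2 (V : finType) (e : rel V) (D : nat) (c a b : nat -> nat)
    (R : realFieldType) (s : nat -> R) (eps : R) :
  simple_graph e -> connected_graph e ->
  distance_regular e c a b -> D = diameter e -> (3 <= D)%N ->
  a 1%N <> 0%N ->
  s 0%N = 1 ->
  [/\ tight_with_aux D c a b s eps <-> (nontrivial_pcs D c a b s /\ condA D a s eps),
      (nontrivial_pcs D c a b s /\ condA D a s eps) <-> (condA D a s eps /\ condB D b s eps) &
      (condA D a s eps /\ condB D b s eps) <-> (condA D a s eps /\ condC D c b s eps)].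
Proof.
move=> [e_sym e_irr] e_conn e_dr D_diam D_ge3 a1_neq0 s0.
have ia := intersection_numbers_drg e_sym e_irr e_conn e_dr D_diam (ltnW (ltnW D_ge3)) a1_neq0.
split; [split | exact: (nontrivial_condA_iff_condB ia D_ge3 eps s0) |
  exact: (condB_iff_condC ia D_ge3 eps s0)].
- by move=> tA; split; [case: tA | exact: (tight_condA ia D_ge3 tA)].
- by case; apply: (condA_tight ia D_ge3).
Qed.
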